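(* Let $\mathbb C$ be a homological category with finite colimits, and let $x\colon X\to A$, $y\colon Y\to A$ be morphisms whose images are normal monomorphisms. Then the morphism $\gamma_1=\gamma_{1_A}\colon (A+X)\times_A(A+Y)\to A_3$ is a normal epimorphism.
   Context: A homological category is a regular pointed category in which the Split Short Five Lemma holds; the image of a morphism is the monomorphism part of its (regular epi, mono) factorization; a normal monomorphism is a kernel of some morphism and a normal epimorphism a cokernel of some morphism. Notation: $\iota_i$ coproduct injections, $[a,b]$ copairing, $\langle a,b,c\rangle$ pairing into a limit. $(A+X)\times_A(A+Y)$ is the pullback of $[1,0]\colon A+X\to A$ and $[1,0]\colon A+Y\to A$, with projections $\pi_1,\pi_2$. $A_3=A\times_{A/X}A\times_{A/Y}A$ is the limit of $A\xrightarrow{\mathsf{coker}(x)}A/X\xleftarrow{\mathsf{coker}(x)}A\xrightarrow{\mathsf{coker}(y)}A/Y\xleftarrow{\mathsf{coker}(y)}A$, and $\gamma_1=\langle [1,x]\pi_1,[1,0]\pi_1,[1,y]\pi_2\rangle$. *)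

Set Implicit Arguments.

Record Category := {
  Ob :> Type;
  Hom : Ob -> Ob -> Type;
  idm : forall A, Hom A A;
  comp : forall A B C, Hom B C -> Hom A B -> Hom A C;
  comp_id_l : forall A B (f : Hom A B), comp (idm B) f = f;
  comp_id_r : forall A B (f : Hom A B), comp f (idm A) = f;
  comp_assoc : forall A B C D (h : Hom C D) (g : Hom B C) (f : Hom A B),
      comp h (comp g f) = comp (comp h g) f
}.

Arguments Hom {c} _ _.
Arguments idm {c} _.
Arguments comp {c A B C} _ _.

Notation "g ∘ f" := (comp g f) (at level 40, left associativity).

Section Defs.
Context {C : Category}.

Definition is_mono {A B : C} (f : Hom A B) : Prop :=
  forall (Z : C) (g h : Hom Z A), f ∘ g = f ∘ h -> g = h.

Definition is_iso {A B : C} (f : Hom A B) : Prop :=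
  exists g : Hom B A, g ∘ f = idm A /\ f ∘ g = idm B.

Definition is_initial (I : C) : Prop :=
  forall B : C, exists f : Hom I B, forall g : Hom I B, g = f.

Definition is_terminal (T : C) : Prop :=
  forall B : C, exists f : Hom B T, forall g : Hom B T, g = f.

Definition is_zero_object (Z : C) : Prop := is_initial Z /\ is_terminal Z.

Definition is_pointed : Prop := exists Z : C, is_zero_object Z.

Definition is_zero_mor {A B : C} (f : Hom A B) : Prop :=
  exists (Z : C) (g : Hom A Z) (h : Hom Z B), is_zero_object Z /\ f = h ∘ g.

Definition is_pullback {A B D P : C} (f : Hom A D) (g : Hom B D)
  (p1 : Hom P A) (p2 : Hom P B) : Prop :=
  f ∘ p1 = g ∘ p2 /\
  forall (Q : C) (q1 : Hom Q A) (q2 : Hom Q B), f ∘ q1 = g ∘ q2 ->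
    exists u : Hom Q P, p1 ∘ u = q1 /\ p2 ∘ u = q2 /\
      forall v : Hom Q P, p1 ∘ v = q1 -> p2 ∘ v = q2 -> v = u.

Definition is_pushout {D A B P : C} (f : Hom D A) (g : Hom D B)
  (i1 : Hom A P) (i2 : Hom B P) : Prop :=
  i1 ∘ f = i2 ∘ g /\
  forall (Q : C) (q1 : Hom A Q) (q2 : Hom B Q), q1 ∘ f = q2 ∘ g ->
    exists u : Hom P Q, u ∘ i1 = q1 /\ u ∘ i2 = q2 /\
      forall v : Hom P Q, v ∘ i1 = q1 -> v ∘ i2 = q2 -> v = u.

Definition is_coproduct {A B S : C} (i1 : Hom A S) (i2 : Hom B S) : Prop :=
  forall (Q : C) (q1 : Hom A Q) (q2 : Hom B Q),
    exists u : Hom S Q, u ∘ i1 = q1 /\ u ∘ i2 = q2 /\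
      forall v : Hom S Q, v ∘ i1 = q1 -> v ∘ i2 = q2 -> v = u.

Definition is_coequalizer {A B Q : C} (f g : Hom A B) (q : Hom B Q) : Prop :=
  q ∘ f = q ∘ g /\
  forall (Z : C) (h : Hom B Z), h ∘ f = h ∘ g ->
    exists u : Hom Q Z, u ∘ q = h /\ forall v : Hom Q Z, v ∘ q = h -> v = u.

Definition is_regular_epi {B Q : C} (q : Hom B Q) : Prop :=
  exists (A : C) (f g : Hom A B), is_coequalizer f g q.

Definition is_kernel {K A B : C} (k : Hom K A) (f : Hom A B) : Prop :=
  is_zero_mor (f ∘ k) /\
  forall (Z : C) (g : Hom Z A), is_zero_mor (f ∘ g) ->
    exists u : Hom Z K, k ∘ u = g /\ forall v : Hom Z K, k ∘ v = g -> v = u.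

Definition is_cokernel {B Q A : C} (q : Hom B Q) (f : Hom A B) : Prop :=
  is_zero_mor (q ∘ f) /\
  forall (Z : C) (g : Hom B Z), is_zero_mor (g ∘ f) ->
    exists u : Hom Q Z, u ∘ q = g /\ forall v : Hom Q Z, v ∘ q = g -> v = u.

Definition is_normal_mono {K A : C} (k : Hom K A) : Prop :=
  exists (B : C) (f : Hom A B), is_kernel k f.

Definition is_normal_epi {B Q : C} (q : Hom B Q) : Prop :=
  exists (A : C) (f : Hom A B), is_cokernel q f.

Definition has_finite_limits : Prop :=
  (exists T : C, is_terminal T) /\
  forall (A B D : C) (f : Hom A D) (g : Hom B D),
    exists (P : C) (p1 : Hom P A) (p2 : Hom P B), is_pullback f g p1 p2.

Definition has_finite_colimits : Prop :=
  (exists I : C, is_initial I) /\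
  forall (D A B : C) (f : Hom D A) (g : Hom D B),
    exists (P : C) (i1 : Hom A P) (i2 : Hom B P), is_pushout f g i1 i2.

Definition is_regular : Prop :=
  has_finite_limits /\
  (forall (A B P : C) (f : Hom A B) (p1 p2 : Hom P A), is_pullback f f p1 p2 ->
     exists (Q : C) (q : Hom A Q), is_coequalizer p1 p2 q) /\
  (forall (A B D P : C) (f : Hom A D) (g : Hom B D) (p1 : Hom P A) (p2 : Hom P B),
     is_pullback f g p1 p2 -> is_regular_epi g -> is_regular_epi p1).

Definition split_short_five_lemma : Prop :=
  forall (K A B K' A' B' : C)
    (k : Hom K A) (p : Hom A B) (s : Hom B A)
    (k' : Hom K' A') (p' : Hom A' B') (s' : Hom B' A')
    (u : Hom K K') (v : Hom A A') (w : Hom B B'),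
    is_kernel k p -> p ∘ s = idm B ->
    is_kernel k' p' -> p' ∘ s' = idm B' ->
    v ∘ k = k' ∘ u -> p' ∘ v = w ∘ p -> v ∘ s = s' ∘ w ->
    is_iso u -> is_iso w -> is_iso v.

Definition is_homological : Prop :=
  is_regular /\ is_pointed /\ split_short_five_lemma.

Definition has_normal_image {X A : C} (x : Hom X A) : Prop :=
  exists (I : C) (e : Hom X I) (m : Hom I A),
    is_regular_epi e /\ is_mono m /\ x = m ∘ e /\ is_normal_mono m.

(* (L; l1, l2, l3) is the limit A ×_{A/X} A ×_{A/Y} A of
   A --qx--> A/X <--qx-- A --qy--> A/Y <--qy-- A *)
Definition is_limit_A3 {A QX QY L : C} (qx : Hom A QX) (qy : Hom A QY)
  (l1 l2 l3 : Hom L A) : Prop :=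
  qx ∘ l1 = qx ∘ l2 /\ qy ∘ l2 = qy ∘ l3 /\
  forall (Z : C) (a b c : Hom Z A), qx ∘ a = qx ∘ b -> qy ∘ b = qy ∘ c ->
    exists u : Hom Z L, l1 ∘ u = a /\ l2 ∘ u = b /\ l3 ∘ u = c /\
      forall v : Hom Z L, l1 ∘ v = a -> l2 ∘ v = b -> l3 ∘ v = c -> v = u.

End Defs.

Arguments is_pointed : clear implicits.
Arguments has_finite_limits : clear implicits.
Arguments has_finite_colimits : clear implicits.
Arguments is_regular : clear implicits.
Arguments split_short_five_lemma : clear implicits.
Arguments is_homological : clear implicits.

(* Factor gamma_1 = m ∘ e with e a regular epimorphism and m a monomorphism.
   The middle projection l2 : A_3 -> A is split by gamma_1 ∘ <i1, j1>, and its
   kernel is Im x × Im y, embedded as <m_x, 0, m_y>. This kernel is covered by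
   X × Y through the product of the regular epimorphisms X -> Im x and
   Y -> Im y, and the cover agrees with gamma_1 ∘ <i2 π_X, j2 π_Y>; so the
   kernel factors through m as well. The Split Short Five Lemma then makes m an
   isomorphism, hence gamma_1 is a regular epimorphism, and regular
   epimorphisms are normal in a homological category. *)


Local Arguments comp_id_l {c A B} f.
Local Arguments comp_id_r {c A B} f.
Local Arguments comp_assoc {c A B C D} h g f.

Section Homological.
Context {C : Category}.

Lemma zero_mor_unique {A B : C} (f g : Hom A B) :
  is_zero_mor f -> is_zero_mor g -> f = g.
Proof.
  intros [Z [g1 [h1 [[HZi HZt] ->]]]] [Z' [g2 [h2 [[HZi' HZt'] ->]]]].
  destruct (HZi Z') as [c _].
  destruct (HZt' A) as [t Ht].
  destruct (HZi B) as [b Hb].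
  assert (E : h1 = h2 ∘ c) by (rewrite (Hb h1), (Hb (h2 ∘ c)); reflexivity).
  rewrite E, <- comp_assoc. f_equal.
  rewrite (Ht (c ∘ g1)), (Ht g2). reflexivity.
Qed.

Lemma zero_mor_postcomp {A B D : C} (f : Hom A B) (g : Hom B D) :
  is_zero_mor f -> is_zero_mor (g ∘ f).
Proof.
  intros [Z [g1 [h1 [HZ ->]]]]. exists Z, g1, (g ∘ h1).
  split; [exact HZ | apply comp_assoc].
Qed.

Lemma zero_mor_precomp {A B D : C} (f : Hom B D) (g : Hom A B) :
  is_zero_mor f -> is_zero_mor (f ∘ g).
Proof.
  intros [Z [g1 [h1 [HZ ->]]]]. exists Z, (g1 ∘ g), h1.
  split; [exact HZ | symmetry; apply comp_assoc].
Qed.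

Lemma zero_mor_exists (Hpt : is_pointed C) (A B : C) :
  exists z : Hom A B, is_zero_mor z.
Proof.
  destruct Hpt as [Z0 [HI HT]].
  destruct (HI B) as [b _]. destruct (HT A) as [a _].
  exists (b ∘ a), Z0, a, b. split; [split; assumption | reflexivity].
Qed.

Lemma iso_idm (A : C) : is_iso (idm A).
Proof. exists (idm A). rewrite comp_id_l. split; reflexivity. Qed.

Definition is_epi {A B : C} (f : Hom A B) : Prop :=
  forall (Z : C) (g h : Hom B Z), g ∘ f = h ∘ f -> g = h.

Lemma regular_epi_is_epi {A B : C} (f : Hom A B) : is_regular_epi f -> is_epi f.
Proof.
  intros [X [a [b [Hab Hu]]]] Z g h E.
  assert (Hg : g ∘ f ∘ a = g ∘ f ∘ b) by (rewrite <- !comp_assoc, Hab; reflexivity).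
  destruct (Hu Z (g ∘ f) Hg) as [u [_ Hun]].
  rewrite (Hun g eq_refl), (Hun h (eq_sym E)). reflexivity.
Qed.

Lemma kernel_is_mono {K A B : C} (k : Hom K A) (f : Hom A B) :
  is_kernel k f -> is_mono k.
Proof.
  intros [Hk0 Hku] Z g h E.
  assert (Hz : is_zero_mor (f ∘ (k ∘ g))).
  { rewrite comp_assoc. apply zero_mor_precomp. exact Hk0. }
  destruct (Hku Z (k ∘ g) Hz) as [u [_ Hun]].
  rewrite (Hun g eq_refl), (Hun h (eq_sym E)). reflexivity.
Qed.

Lemma pullback_ext {A B D P : C} {f : Hom A D} {g : Hom B D}
  {p1 : Hom P A} {p2 : Hom P B} :
  is_pullback f g p1 p2 ->
  forall (Q : C) (v w : Hom Q P), p1 ∘ v = p1 ∘ w -> p2 ∘ v = p2 ∘ w -> v = w.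
Proof.
  intros [Hc Hu] Q v w E1 E2.
  assert (H : f ∘ (p1 ∘ v) = g ∘ (p2 ∘ v)) by (rewrite !comp_assoc, Hc; reflexivity).
  destruct (Hu Q _ _ H) as [u [_ [_ Hun]]].
  rewrite (Hun v eq_refl eq_refl), (Hun w (eq_sym E1) (eq_sym E2)). reflexivity.
Qed.

Lemma pullback_sym {A B D P : C} (f : Hom A D) (g : Hom B D)
  (p1 : Hom P A) (p2 : Hom P B) :
  is_pullback f g p1 p2 -> is_pullback g f p2 p1.
Proof.
  intros [Hc Hu]. split; [symmetry; exact Hc|].
  intros Q q1 q2 Hq. destruct (Hu Q q2 q1 (eq_sym Hq)) as [u [Hu1 [Hu2 Hun]]].
  exists u. split; [exact Hu2 | split; [exact Hu1|]].
  intros v Hv1 Hv2. exact (Hun v Hv2 Hv1).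
Qed.

Lemma pullback_paste_left {A B D E Q R : C} (f : Hom A B) (g : Hom B D)
  (h : Hom E D) (q1 : Hom Q B) (q2 : Hom Q E) (r1 : Hom R A) (r2 : Hom R E)
  (p : Hom R Q) :
  is_pullback g h q1 q2 -> is_pullback (g ∘ f) h r1 r2 ->
  q1 ∘ p = f ∘ r1 -> q2 ∘ p = r2 -> is_pullback q1 f p r1.
Proof.
  intros Hq [_ Hru] E1 E2. split; [exact E1|].
  intros Z z1 z2 Hz.
  assert (Hz' : g ∘ f ∘ z2 = h ∘ (q2 ∘ z1)).
  { rewrite <- comp_assoc, <- Hz, comp_assoc, (proj1 Hq), <- comp_assoc.
    reflexivity. }
  destruct (Hru Z z2 (q2 ∘ z1) Hz') as [u [Hu1 [Hu2 Hun]]].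
  exists u. split; [|split; [exact Hu1|]].
  - apply (pullback_ext Hq).
    + rewrite comp_assoc, E1, <- comp_assoc, Hu1. symmetry; exact Hz.
    + rewrite comp_assoc, E2. exact Hu2.
  - intros v Hv1 Hv2. apply Hun; [exact Hv2|].
    rewrite <- Hv1, comp_assoc, E2. reflexivity.
Qed.

Definition is_product {P X Y : C} (a : Hom P X) (b : Hom P Y) : Prop :=
  forall (Q : C) (q1 : Hom Q X) (q2 : Hom Q Y),
    exists u : Hom Q P, a ∘ u = q1 /\ b ∘ u = q2 /\
      forall v : Hom Q P, a ∘ v = q1 -> b ∘ v = q2 -> v = u.

Lemma product_ext {P X Y : C} {a : Hom P X} {b : Hom P Y} :
  is_product a b ->
  forall (Q : C) (v w : Hom Q P), a ∘ v = a ∘ w -> b ∘ v = b ∘ w -> v = w.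
Proof.
  intros Hu Q v w E1 E2.
  destruct (Hu Q (a ∘ v) (b ∘ v)) as [u [_ [_ Hun]]].
  rewrite (Hun v eq_refl eq_refl), (Hun w (eq_sym E1) (eq_sym E2)). reflexivity.
Qed.

Lemma product_swap {P X Y : C} (a : Hom P X) (b : Hom P Y) :
  is_product a b -> is_product b a.
Proof.
  intros H Q q1 q2. destruct (H Q q2 q1) as [u [H1 [H2 H3]]].
  exists u. split; [exact H2 | split; [exact H1|]].
  intros v Hv1 Hv2. exact (H3 v Hv2 Hv1).
Qed.

Lemma product_exists (HL : has_finite_limits C) (X Y : C) :
  exists (P : C) (a : Hom P X) (b : Hom P Y), is_product a b.
Proof.
  destruct HL as [[T HT] HPB].
  destruct (HT X) as [tx _]. destruct (HT Y) as [ty _].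
  destruct (HPB X Y T tx ty) as [P [a [b [_ Hu]]]].
  exists P, a, b. intros Q q1 q2.
  destruct (HT Q) as [tq Htq].
  apply Hu. rewrite (Htq (tx ∘ q1)), (Htq (ty ∘ q2)). reflexivity.
Qed.

(* The equalizer is the pullback of the two graph morphisms <1, h1>, <1, h2>. *)
Lemma equalizer_exists (HL : has_finite_limits C) {R W : C} (h1 h2 : Hom R W) :
  exists (E : C) (e : Hom E R), h1 ∘ e = h2 ∘ e /\ is_mono e /\
    forall (Z : C) (z : Hom Z R), h1 ∘ z = h2 ∘ z -> exists u, e ∘ u = z.
Proof.
  destruct (product_exists HL R W) as [RW [a [b Hp]]].
  destruct (Hp R (idm R) h1) as [g1 [Ha1 [Hb1 _]]].
  destruct (Hp R (idm R) h2) as [g2 [Ha2 [Hb2 _]]].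
  destruct (proj2 HL R R RW g1 g2) as [E [e1 [e2 HE]]].
  assert (E12 : e1 = e2).
  { transitivity (a ∘ g1 ∘ e1); [rewrite Ha1, comp_id_l; reflexivity|].
    rewrite <- comp_assoc, (proj1 HE), comp_assoc, Ha2, comp_id_l. reflexivity. }
  subst e2.
  exists E, e1. split; [|split].
  - rewrite <- Hb1, <- Hb2, <- !comp_assoc, (proj1 HE). reflexivity.
  - intros Z v w Hvw. exact (pullback_ext HE Z v w Hvw Hvw).
  - intros Z z Hz.
    assert (G : g1 ∘ z = g2 ∘ z).
    { apply (product_ext Hp).
      + rewrite !comp_assoc, Ha1, Ha2. reflexivity.
      + rewrite !comp_assoc, Hb1, Hb2. exact Hz. }
    destruct (proj2 HE Z z z G) as [u [Hu _]]. exists u. exact Hu.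
Qed.

Lemma kernel_restrict_mono {K I A B : C} (k : Hom K A) (p : Hom A B)
  (m : Hom I A) (k' : Hom K I) :
  is_kernel k p -> is_mono m -> m ∘ k' = k -> is_kernel k' (p ∘ m).
Proof.
  intros [Hk0 Hku] Hm Hk'. split.
  - rewrite <- comp_assoc, Hk'. exact Hk0.
  - intros Z g Hg. rewrite <- comp_assoc in Hg.
    destruct (Hku Z (m ∘ g) Hg) as [u [Hu1 Hu2]].
    exists u. split.
    + apply Hm. rewrite comp_assoc, Hk'. exact Hu1.
    + intros v Hv. apply Hu2. rewrite <- Hk', <- comp_assoc, Hv. reflexivity.
Qed.

Lemma split_kernel_mono_iso (HS : split_short_five_lemma C) {K I A B : C}
  (k : Hom K A) (p : Hom A B) (s : Hom B A) (m : Hom I A)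
  (k' : Hom K I) (s' : Hom B I) :
  is_kernel k p -> p ∘ s = idm B -> is_mono m -> m ∘ k' = k -> m ∘ s' = s ->
  is_iso m.
Proof.
  intros Hk Hs Hm Hk' Hs'.
  apply (HS K I B K A B k' (p ∘ m) s' k p s (idm K) m (idm B)).
  - exact (kernel_restrict_mono k p m k' Hk Hm Hk').
  - rewrite <- comp_assoc, Hs'. exact Hs.
  - exact Hk.
  - exact Hs.
  - rewrite comp_id_r. exact Hk'.
  - rewrite comp_id_l. reflexivity.
  - rewrite comp_id_r. exact Hs'.
  - apply iso_idm.
  - apply iso_idm.
Qed.

(* The equalizer of h1 and h2 contains the kernel and the section, so it is
   an isomorphism. *)
Lemma split_kernel_jointly_epi (HL : has_finite_limits C)
  (HS : split_short_five_lemma C) {K R B W : C}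
  (k : Hom K R) (p : Hom R B) (s : Hom B R) (h1 h2 : Hom R W) :
  is_kernel k p -> p ∘ s = idm B -> h1 ∘ s = h2 ∘ s -> h1 ∘ k = h2 ∘ k -> h1 = h2.
Proof.
  intros Hk Hs E1 E2.
  destruct (equalizer_exists HL h1 h2) as [E [e [He [Hm Hu]]]].
  destruct (Hu _ s E1) as [s' Hs']. destruct (Hu _ k E2) as [k' Hk'].
  destruct (split_kernel_mono_iso HS k p s e k' s' Hk Hs Hm Hk' Hs') as [g [_ Hg]].
  rewrite <- (comp_id_r h1), <- (comp_id_r h2), <- Hg, !comp_assoc, He.
  reflexivity.
Qed.

Lemma kernel_exists (Hpt : is_pointed C) (HL : has_finite_limits C) {B Q : C}
  (q : Hom B Q) : exists (K : C) (k : Hom K B), is_kernel k q.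
Proof.
  destruct Hpt as [Z0 [HI HT]]. destruct (HI Q) as [zq _].
  destruct (proj2 HL B Z0 Q q zq) as [K [k [t HK]]].
  exists K, k. split.
  - exists Z0, t, zq. split; [split; assumption | exact (proj1 HK)].
  - intros Z g Hg. destruct (HT Z) as [tz Htz].
    assert (E : q ∘ g = zq ∘ tz).
    { apply zero_mor_unique; [exact Hg|].
      exists Z0, tz, zq. split; [split; assumption | reflexivity]. }
    destruct (proj2 HK Z g tz E) as [u [Hu _]].
    exists u. split; [exact Hu|].
    intros v Hv. apply (pullback_ext HK).
    + rewrite Hv, Hu. reflexivity.
    + rewrite (Htz (t ∘ v)), (Htz (t ∘ u)). reflexivity.
Qed.

Lemma kernel_pair_projection_kernel {K B R Q : C} (q : Hom B Q)
  (r1 r2 : Hom R B) (k : Hom K B) (k' : Hom K R) :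
  is_pullback q q r1 r2 -> is_kernel k q -> r1 ∘ k' = k -> is_zero_mor (r2 ∘ k') ->
  is_kernel k' r2.
Proof.
  intros HR [_ Hku] Hk1 Hk2. split; [exact Hk2|].
  intros Z z Hz.
  assert (Hz1 : is_zero_mor (q ∘ (r1 ∘ z))).
  { rewrite comp_assoc, (proj1 HR), <- comp_assoc. apply zero_mor_postcomp. exact Hz. }
  destruct (Hku Z (r1 ∘ z) Hz1) as [u [Hu1 Hu2]].
  exists u. split.
  - apply (pullback_ext HR).
    + rewrite comp_assoc, Hk1. exact Hu1.
    + rewrite comp_assoc. apply zero_mor_unique; [|exact Hz].
      apply zero_mor_precomp. exact Hk2.
  - intros v Hv. apply Hu2. rewrite <- Hk1, <- comp_assoc, Hv. reflexivity.
Qed.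

(* If h kills the kernel of q, then h r1 = h r2 on the kernel pair of q: the
   projection r2 is split by the diagonal and its kernel is <k, 0>. *)
Lemma regular_epi_cokernel_of_kernel (Hpt : is_pointed C)
  (HL : has_finite_limits C) (HS : split_short_five_lemma C) {K B Q : C}
  (q : Hom B Q) (k : Hom K B) :
  is_regular_epi q -> is_kernel k q -> is_cokernel q k.
Proof.
  intros [A' [f [g [Hfg Hq]]]] Hk.
  split; [exact (proj1 Hk)|].
  intros W h Hh.
  destruct (proj2 HL B B Q q q) as [R [r1 [r2 HR]]].
  destruct (proj2 HR B (idm B) (idm B) eq_refl) as [d [Hd1 [Hd2 _]]].
  destruct (zero_mor_exists Hpt K B) as [z Hz].
  assert (Ez : q ∘ k = q ∘ z).
  { apply zero_mor_unique; [exact (proj1 Hk)|]. apply zero_mor_postcomp. exact Hz. }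
  destruct (proj2 HR K k z Ez) as [k' [Hk1 [Hk2 _]]].
  assert (Hker : is_kernel k' r2).
  { apply (kernel_pair_projection_kernel q r1 r2 k k' HR Hk Hk1).
    rewrite Hk2. exact Hz. }
  assert (Hr : h ∘ r1 = h ∘ r2).
  { apply (split_kernel_jointly_epi HL HS k' r2 d _ _ Hker Hd2).
    - rewrite <- !comp_assoc, Hd1, Hd2. reflexivity.
    - rewrite <- !comp_assoc, Hk1, Hk2. apply zero_mor_unique; [exact Hh|].
      apply zero_mor_postcomp. exact Hz. }
  destruct (proj2 HR A' f g Hfg) as [t [Ht1 [Ht2 _]]].
  apply Hq. rewrite <- Ht1, <- Ht2, !comp_assoc, Hr. reflexivity.
Qed.

Lemma regular_epi_normal (HC : is_homological C) {B Q : C} (q : Hom B Q) :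
  is_regular_epi q -> is_normal_epi q.
Proof.
  destruct HC as [[HL _] [Hpt HS]]. intros Hq.
  destruct (kernel_exists Hpt HL q) as [K [k Hk]].
  exists K, k. exact (regular_epi_cokernel_of_kernel Hpt HL HS q k Hq Hk).
Qed.

(* With f = m ∘ e, the coequalizer e of the kernel pair of f, the maps
   p1 : R -> T and p2 : T -> S comparing the kernel pairs of f, of (m, f) and
   of m are pullbacks of e, hence epimorphisms; this forces s1 = s2. *)
Lemma regular_factorization (HR : is_regular C) {A B : C} (f : Hom A B) :
  exists (I : C) (e : Hom A I) (m : Hom I B),
    is_regular_epi e /\ is_mono m /\ f = m ∘ e.
Proof.
  destruct HR as [[_ HPB] [Hcoeq Hstab]].
  destruct (HPB A A B f f) as [R [r1 [r2 HRp]]].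
  destruct (Hcoeq A B R f r1 r2 HRp) as [I [e He]].
  destruct (proj2 He B f (proj1 HRp)) as [m [Hme _]].
  subst f.
  assert (Hreg : is_regular_epi e) by (exists R, r1, r2; exact He).
  exists I, e, m. split; [exact Hreg | split; [|reflexivity]].
  intros Z a b Hab.
  destruct (HPB I I B m m) as [S [s1 [s2 HS]]].
  destruct (HPB I A B m (m ∘ e)) as [T [t1 [t2 HT]]].
  assert (E1 : m ∘ (e ∘ r1) = m ∘ e ∘ r2) by (rewrite comp_assoc; exact (proj1 HRp)).
  destruct (proj2 HT R _ _ E1) as [p1 [Hp11 [Hp12 _]]].
  assert (E2 : m ∘ t1 = m ∘ (e ∘ t2)) by (rewrite comp_assoc; exact (proj1 HT)).
  destruct (proj2 HS T _ _ E2) as [p2 [Hp21 [Hp22 _]]].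
  assert (Ep1 : is_epi p1).
  { apply regular_epi_is_epi, (Hstab _ _ _ _ t1 e p1 r1); [|exact Hreg].
    exact (pullback_paste_left e m (m ∘ e) t1 t2 r1 r2 p1 HT HRp Hp11 Hp12). }
  assert (Ep2 : is_epi p2).
  { apply regular_epi_is_epi, (Hstab _ _ _ _ s2 e p2 t2); [|exact Hreg].
    exact (pullback_paste_left e m m s2 s1 t2 t1 p2
             (pullback_sym _ _ _ _ HS) (pullback_sym _ _ _ _ HT) Hp22 Hp21). }
  assert (Hs : s1 = s2).
  { apply Ep2, Ep1. rewrite Hp21, Hp22, Hp11, <- comp_assoc, Hp12. exact (proj1 He). }
  destruct (proj2 HS Z a b Hab) as [w [Hw1 [Hw2 _]]].
  rewrite <- Hw1, <- Hw2, Hs. reflexivity.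
Qed.

Lemma regular_epi_comp_iso {A B D : C} (e : Hom A B) (m : Hom B D) :
  is_regular_epi e -> is_iso m -> is_regular_epi (m ∘ e).
Proof.
  intros [X [a [b [Hab Hu]]]] [mi [Hmi1 Hmi2]].
  exists X, a, b. split.
  - rewrite <- !comp_assoc, Hab. reflexivity.
  - intros Z h Hh. destruct (Hu Z h Hh) as [u [Hu1 Hu2]].
    exists (u ∘ mi). split.
    + rewrite <- !comp_assoc, (comp_assoc mi m e), Hmi1, comp_id_l. exact Hu1.
    + intros v Hv. rewrite <- (Hu2 (v ∘ m)).
      * rewrite <- comp_assoc, Hmi2, comp_id_r. reflexivity.
      * rewrite <- comp_assoc. exact Hv.
Qed.

Definition lifts_through_monos {P Q : C} (g : Hom P Q) : Prop :=
  forall (W R : C) (m : Hom W R) (h : Hom Q R) (w : Hom P W),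
    is_mono m -> h ∘ g = m ∘ w -> exists t : Hom Q W, m ∘ t = h.

Lemma regular_epi_lifts_through_monos {P Q : C} (g : Hom P Q) :
  is_regular_epi g -> lifts_through_monos g.
Proof.
  intros Hg W R m h w Hm E.
  pose proof (regular_epi_is_epi g Hg) as Eg.
  destruct Hg as [X [a [b [Hab Hu]]]].
  assert (Hw : w ∘ a = w ∘ b).
  { apply Hm. rewrite !comp_assoc, <- E, <- !comp_assoc, Hab. reflexivity. }
  destruct (Hu W w Hw) as [t [Ht _]].
  exists t. apply Eg. rewrite <- comp_assoc, Ht. symmetry. exact E.
Qed.

Lemma lifts_through_monos_comp {P M Q : C} (g1 : Hom P M) (g2 : Hom M Q) :
  lifts_through_monos g1 -> lifts_through_monos g2 -> lifts_through_monos (g2 ∘ g1).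
Proof.
  intros H1 H2 W R m h w Hm E.
  rewrite comp_assoc in E.
  destruct (H1 W R m (h ∘ g2) w Hm E) as [t1 Ht1].
  exact (H2 W R m h t1 Hm (eq_sym Ht1)).
Qed.

(* The square formed by e × 1 and the projections to X and X' is a pullback. *)
Lemma product_map_regular_epi (HR : is_regular C) {P1 P2 X X' Y : C}
  (a1 : Hom P1 X) (b1 : Hom P1 Y) (a2 : Hom P2 X') (b2 : Hom P2 Y)
  (e : Hom X X') (g : Hom P1 P2) :
  is_product a1 b1 -> is_product a2 b2 -> is_regular_epi e ->
  a2 ∘ g = e ∘ a1 -> b2 ∘ g = b1 -> is_regular_epi g.
Proof.
  intros H1 H2 He Ea Eb.
  apply (proj2 (proj2 HR) _ _ _ _ a2 e g a1); [|exact He].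
  split; [exact Ea|].
  intros Q q1 q2 Hq.
  destruct (H1 Q q2 (b2 ∘ q1)) as [u [Hu1 [Hu2 Hun]]].
  exists u. split; [|split; [exact Hu1|]].
  - apply (product_ext H2).
    + rewrite comp_assoc, Ea, <- comp_assoc, Hu1. symmetry. exact Hq.
    + rewrite comp_assoc, Eb. exact Hu2.
  - intros v Hv1 Hv2. apply Hun; [exact Hv2|].
    rewrite <- Hv1, comp_assoc, Eb. reflexivity.
Qed.

Lemma product_map_lifts_through_monos (HR : is_regular C) {X Y X' Y' P P' : C}
  (a : Hom P X) (b : Hom P Y) (a' : Hom P' X') (b' : Hom P' Y')
  (ex : Hom X X') (ey : Hom Y Y') :
  is_product a b -> is_product a' b' -> is_regular_epi ex -> is_regular_epi ey ->
  exists g : Hom P P', lifts_through_monos g /\ a' ∘ g = ex ∘ a /\ b' ∘ g = ey ∘ b.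
Proof.
  intros Hp Hp' Hx Hy.
  destruct (product_exists (proj1 HR) X' Y) as [M [c [d Hm]]].
  destruct (Hm P (ex ∘ a) b) as [g1 [Hg11 [Hg12 _]]].
  destruct (Hp' M c (ey ∘ d)) as [g2 [Hg21 [Hg22 _]]].
  exists (g2 ∘ g1). split; [|split].
  - apply lifts_through_monos_comp; apply regular_epi_lifts_through_monos.
    + exact (product_map_regular_epi HR a b c d ex g1 Hp Hm Hx Hg11 Hg12).
    + exact (product_map_regular_epi HR d c b' a' ey g2
               (product_swap c d Hm) (product_swap a' b' Hp') Hy Hg22 Hg21).
  - rewrite comp_assoc, Hg21. exact Hg11.
  - rewrite comp_assoc, Hg22, <- comp_assoc, Hg12. reflexivity.
Qed.

Lemma normal_image_kernel {X A Q : C} (x : Hom X A) (q : Hom A Q) :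
  has_normal_image x -> is_cokernel q x ->
  exists (I : C) (e : Hom X I) (m : Hom I A),
    is_regular_epi e /\ x = m ∘ e /\ is_kernel m q.
Proof.
  intros [I [e [m [He [_ [Hx [B' [f [Hf0 Hfu]]]]]]]]] [Hq0 Hqu].
  exists I, e, m. split; [exact He | split; [exact Hx|]].
  assert (Hpt : is_pointed C).
  { destruct Hq0 as [Z [_ [_ [HZ _]]]]. exists Z. exact HZ. }
  destruct (zero_mor_exists Hpt I Q) as [z Hz].
  assert (Hqm : q ∘ m = z).
  { apply (regular_epi_is_epi e He). apply zero_mor_unique.
    - rewrite <- comp_assoc, <- Hx. exact Hq0.
    - apply zero_mor_precomp. exact Hz. }
  split; [rewrite Hqm; exact Hz|].
  intros W g Hg.
  assert (Hfx : is_zero_mor (f ∘ x)).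
  { rewrite Hx, comp_assoc. apply zero_mor_precomp. exact Hf0. }
  destruct (Hqu B' f Hfx) as [u [Hu _]].
  apply Hfu. rewrite <- Hu, <- comp_assoc. apply zero_mor_postcomp. exact Hg.
Qed.

Lemma limit_A3_ext {A QX QY L Z : C} {qx : Hom A QX} {qy : Hom A QY}
  {l1 l2 l3 : Hom L A} :
  is_limit_A3 qx qy l1 l2 l3 ->
  forall v w : Hom Z L, l1 ∘ v = l1 ∘ w -> l2 ∘ v = l2 ∘ w -> l3 ∘ v = l3 ∘ w ->
    v = w.
Proof.
  intros [H12 [H23 Hu]] v w E1 E2 E3.
  assert (F1 : qx ∘ (l1 ∘ v) = qx ∘ (l2 ∘ v)) by (rewrite !comp_assoc, H12; reflexivity).
  assert (F2 : qy ∘ (l2 ∘ v) = qy ∘ (l3 ∘ v)) by (rewrite !comp_assoc, H23; reflexivity).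
  destruct (Hu Z _ _ _ F1 F2) as [u [_ [_ [_ Hun]]]].
  rewrite (Hun v), (Hun w); auto.
Qed.

Lemma limit_A3_kernel (Hpt : is_pointed C) {A QX QY L IX IY K : C}
  {qx : Hom A QX} {qy : Hom A QY} {l1 l2 l3 : Hom L A}
  (mx : Hom IX A) (my : Hom IY A) (ax : Hom K IX) (ay : Hom K IY) :
  is_limit_A3 qx qy l1 l2 l3 -> is_kernel mx qx -> is_kernel my qy ->
  is_product ax ay ->
  exists k : Hom K L, l1 ∘ k = mx ∘ ax /\ l3 ∘ k = my ∘ ay /\ is_kernel k l2.
Proof.
  intros HA3 Kx Ky HK.
  pose proof HA3 as [H12 [H23 Hu]].
  destruct (zero_mor_exists Hpt K A) as [z Hz].
  assert (F1 : qx ∘ (mx ∘ ax) = qx ∘ z).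
  { apply zero_mor_unique.
    - rewrite comp_assoc. apply zero_mor_precomp, Kx.
    - apply zero_mor_postcomp. exact Hz. }
  assert (F2 : qy ∘ z = qy ∘ (my ∘ ay)).
  { apply zero_mor_unique.
    - apply zero_mor_postcomp. exact Hz.
    - rewrite comp_assoc. apply zero_mor_precomp, Ky. }
  destruct (Hu K _ _ _ F1 F2) as [k [Hk1 [Hk2 [Hk3 _]]]].
  exists k. split; [exact Hk1 | split; [exact Hk3|]].
  split; [rewrite Hk2; exact Hz|].
  intros W g Hg.
  assert (G1 : is_zero_mor (qx ∘ (l1 ∘ g))).
  { rewrite comp_assoc, H12, <- comp_assoc. apply zero_mor_postcomp. exact Hg. }
  assert (G3 : is_zero_mor (qy ∘ (l3 ∘ g))).
  { rewrite comp_assoc, <- H23, <- comp_assoc. apply zero_mor_postcomp. exact Hg. }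
  destruct (proj2 Kx W _ G1) as [a [Ha _]].
  destruct (proj2 Ky W _ G3) as [c [Hc _]].
  destruct (HK W a c) as [u [Hu1 [Hu2 Hun]]].
  exists u. split.
  - apply (limit_A3_ext HA3).
    + rewrite comp_assoc, Hk1, <- comp_assoc, Hu1. exact Ha.
    + rewrite comp_assoc, Hk2. apply zero_mor_unique; [|exact Hg].
      apply zero_mor_precomp. exact Hz.
    + rewrite comp_assoc, Hk3, <- comp_assoc, Hu2. exact Hc.
  - intros v Hv. apply Hun.
    + apply (kernel_is_mono mx qx Kx). rewrite Ha, <- Hv, !comp_assoc, Hk1. reflexivity.
    + apply (kernel_is_mono my qy Ky). rewrite Hc, <- Hv, !comp_assoc, Hk3. reflexivity.
Qed.

Lemma limit_A3_kernel_covered (HR : is_regular C) (Hpt : is_pointed C)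
  {X Y A QX QY L XY : C} {qx : Hom A QX} {qy : Hom A QY} {l1 l2 l3 : Hom L A}
  (x : Hom X A) (y : Hom Y A) (px : Hom XY X) (py : Hom XY Y) :
  is_limit_A3 qx qy l1 l2 l3 -> has_normal_image x -> has_normal_image y ->
  is_cokernel qx x -> is_cokernel qy y -> is_product px py ->
  exists (K : C) (k : Hom K L) (g : Hom XY K),
    is_kernel k l2 /\ lifts_through_monos g /\
    l1 ∘ (k ∘ g) = x ∘ px /\ l3 ∘ (k ∘ g) = y ∘ py.
Proof.
  intros HA3 Hx Hy Hqx Hqy HXY.
  destruct (normal_image_kernel x qx Hx Hqx) as [IX [ex [mx [Hex [Hxe Kx]]]]].
  destruct (normal_image_kernel y qy Hy Hqy) as [IY [ey [my [Hey [Hye Ky]]]]].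
  destruct (product_exists (proj1 HR) IX IY) as [K [ax [ay HK]]].
  destruct (limit_A3_kernel Hpt mx my ax ay HA3 Kx Ky HK) as [k [Hk1 [Hk3 Hker]]].
  destruct (product_map_lifts_through_monos HR px py ax ay ex ey HXY HK Hex Hey)
    as [g [Hg [Hgx Hgy]]].
  exists K, k, g. split; [exact Hker | split; [exact Hg | split]].
  - rewrite comp_assoc, Hk1, <- comp_assoc, Hgx, comp_assoc, <- Hxe. reflexivity.
  - rewrite comp_assoc, Hk3, <- comp_assoc, Hgy, comp_assoc, <- Hye. reflexivity.
Qed.

End Homological.

Theorem theorem1p6 (C : Category) (HC : is_homological C)
  (HF : has_finite_colimits C)
  (A X Y : C) (x : Hom X A) (y : Hom Y A)
  (Hx : has_normal_image x) (Hy : has_normal_image y)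
  (* A + X with [1,x] and [1,0] *)
  (AX : C) (i1 : Hom A AX) (i2 : Hom X AX) (HAX : is_coproduct i1 i2)
  (cx zx : Hom AX A)
  (Hcx1 : cx ∘ i1 = idm A) (Hcx2 : cx ∘ i2 = x)
  (Hzx1 : zx ∘ i1 = idm A) (Hzx2 : is_zero_mor (zx ∘ i2))
  (* A + Y with [1,y] and [1,0] *)
  (AY : C) (j1 : Hom A AY) (j2 : Hom Y AY) (HAY : is_coproduct j1 j2)
  (cy zy : Hom AY A)
  (Hcy1 : cy ∘ j1 = idm A) (Hcy2 : cy ∘ j2 = y)
  (Hzy1 : zy ∘ j1 = idm A) (Hzy2 : is_zero_mor (zy ∘ j2))
  (* (A+X) ×_A (A+Y) *)
  (P : C) (pi1 : Hom P AX) (pi2 : Hom P AY) (HP : is_pullback zx zy pi1 pi2)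
  (* cokernels A -> A/X, A -> A/Y *)
  (QX : C) (qx : Hom A QX) (Hqx : is_cokernel qx x)
  (QY : C) (qy : Hom A QY) (Hqy : is_cokernel qy y)
  (* A_3 *)
  (A3 : C) (l1 l2 l3 : Hom A3 A) (HA3 : is_limit_A3 qx qy l1 l2 l3)
  (* gamma_1 = < [1,x] pi1, [1,0] pi1, [1,y] pi2 > *)
  (gamma1 : Hom P A3)
  (Hg1 : l1 ∘ gamma1 = cx ∘ pi1) (Hg2 : l2 ∘ gamma1 = zx ∘ pi1)
  (Hg3 : l3 ∘ gamma1 = cy ∘ pi2) :
  is_normal_epi gamma1.
Proof.
  pose proof HC as [HR [Hpt HS]].
  destruct (regular_factorization HR gamma1) as [I [e [m [He [Hm Hgamma]]]]].
  destruct (proj2 HP A i1 j1 (eq_trans Hzx1 (eq_sym Hzy1))) as [s [Hs1 _]].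
  destruct (product_exists (proj1 HR) X Y) as [XY [px [py HXY]]].
  destruct (limit_A3_kernel_covered HR Hpt x y px py HA3 Hx Hy Hqx Hqy HXY)
    as [K [k [g [Hker [Hg [Hkg1 Hkg3]]]]]].
  assert (Et : zx ∘ (i2 ∘ px) = zy ∘ (j2 ∘ py)).
  { apply zero_mor_unique; rewrite comp_assoc; apply zero_mor_precomp; assumption. }
  destruct (proj2 HP XY _ _ Et) as [t [Ht1 [Ht2 _]]].
  assert (Hkg : k ∘ g = gamma1 ∘ t).
  { apply (limit_A3_ext HA3).
    - rewrite Hkg1, comp_assoc, Hg1, <- comp_assoc, Ht1, comp_assoc, Hcx2. reflexivity.
    - apply zero_mor_unique.
      + rewrite comp_assoc. apply zero_mor_precomp, Hker.
      + rewrite comp_assoc, Hg2, <- comp_assoc, Ht1, comp_assoc.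
        apply zero_mor_precomp. exact Hzx2.
    - rewrite Hkg3, comp_assoc, Hg3, <- comp_assoc, Ht2, comp_assoc, Hcy2. reflexivity. }
  destruct (Hg _ _ m k (e ∘ t) Hm) as [kI HkI].
  { rewrite Hkg, Hgamma, comp_assoc. reflexivity. }
  apply (regular_epi_normal HC). rewrite Hgamma.
  apply (regular_epi_comp_iso e m He).
  apply (split_kernel_mono_iso HS k l2 (gamma1 ∘ s) m kI (e ∘ s) Hker).
  - rewrite comp_assoc, Hg2, <- comp_assoc, Hs1. exact Hzx1.
  - exact Hm.
  - exact HkI.
  - rewrite comp_assoc, Hgamma. reflexivity.
Qed.
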